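(* Let $\{p_\sigma\}$ and $\{p'_\sigma\}$ be two systems of probability parameters indexed by the non-empty proper subsets $\sigma\subsetneq[n]$ with $p_\sigma\le p'_\sigma$ for every simplex $\sigma$, and let $\underline{\mathbb P}_n,\underline{\mathbb P}'_n$ (resp. $\overline{\mathbb P}_n,\overline{\mathbb P}'_n$) be the associated lower (resp. upper) measures. Then for any integer $d\ge0$, $$\underline{\mathbb P}_n(\dim Y\ge d)\le\underline{\mathbb P}'_n(\dim Y\ge d)\quad\text{and}\quad\overline{\mathbb P}_n(\dim Y\ge d)\le\overline{\mathbb P}'_n(\dim Y\ge d).$$
   Context: $[n]=\{0,\dots,n\}$. Given parameters $p_\sigma\in[0,1]$ for non-empty proper subsets $\sigma\subsetneq[n]$, let $X$ be the random hypergraph containing each such $\sigma$ independently with probability $p_\sigma$. The lower measure is the law of the largest simplicial complex contained in $X$; the upper measure is the law of the smallest simplicial complex containing $X$. *)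

(* Vertex set [n] = {0,...,n} is 'I_n.+1. *)
From HB Require Import structures.
From mathcomp Require Import all_boot all_order all_algebra.
Set Implicit Arguments. Unset Strict Implicit. Unset Printing Implicit Defensive.
Import Order.TTheory GRing.Theory Num.Theory.
Local Open Scope ring_scope.

Section RandomComplex.
Variable n : nat.
Notation V := 'I_n.+1.

Definition simplices : {set {set V}} :=
  [set s : {set V} | (s != set0) && (s != setT)].

(* Lower complex: largest simplicial complex contained in X. *)
Definition lower_cx (X : {set {set V}}) : {set {set V}} :=
  [set s in X | [forall t : {set V}, ((t != set0) && (t \subset s)) ==> (t \in X)]].

(* Upper complex: smallest simplicial complex containing X. *)
Definition upper_cx (X : {set {set V}}) : {set {set V}} :=
  [set t : {set V} | (t != set0) && [exists s in X, t \subset s]].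

(* dim Y >= d  iff  Y has a face with at least d+1 vertices. *)
Definition dim_ge (Y : {set {set V}}) (d : nat) : bool :=
  [exists s in Y, (d.+1 <= #|s|)%N].

Variable R : realFieldType.

Definition hyper_prob (p : {set V} -> R) (X : {set {set V}}) : R :=
  \prod_(s in simplices) (if s \in X then p s else 1 - p s).

Definition lower_measure (p : {set V} -> R) (E : pred {set {set V}}) : R :=
  \sum_(X : {set {set V}} | (X \subset simplices) && E (lower_cx X)) hyper_prob p X.

Definition upper_measure (p : {set V} -> R) (E : pred {set {set V}}) : R :=
  \sum_(X : {set {set V}} | (X \subset simplices) && E (upper_cx X)) hyper_prob p X.

End RandomComplex.

From HB Require Import structures.
From mathcomp Require Import all_boot all_order all_algebra.
Import Order.TTheory GRing.Theory Num.Theory.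
Local Open Scope ring_scope.
Set Implicit Arguments. Unset Strict Implicit.

(* Both measures are images of the product (Bernoulli) measure on subsets X
   of the simplices, and since the lower and the upper complex are monotone
   in X, the event "dim Y >= d" pulls back to an upward-closed event in X.
   For an upward-closed event E, pairing X with X + {s} (s not in X) shows
   that the contribution of the pair is w ((1 - q) [E X] + q [E (X + {s})])
   with [E X] <= [E (X + {s})] and w independent of q s, which is
   nondecreasing in q s.  Raising the parameters one simplex at a time then
   proves the monotonicity. *)

Definition upward_closed (T : finType) (E : pred {set T}) :=
  forall X Y : {set T}, X \subset Y -> E X -> E Y.

Lemma upward_closed_comp (T U : finType) (E : pred {set U})
    (f : {set T} -> {set U}) :
  upward_closed E -> {homo f : X Y / X \subset Y} -> upward_closed (E \o f).
Proof. by move=> Eup fmono X Y XY /=; apply: Eup; apply: fmono. Qed.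

Lemma sumr_sets_setU1 (T : finType) (V : nmodType) (x : T) (F : {set T} -> V) :
  \sum_(X : {set T}) F X = \sum_(X : {set T} | x \notin X) (F X + F (x |: X)).
Proof.
rewrite (bigID (fun X : {set T} => x \in X)) /= addrC big_split /=.
congr (_ + _).
rewrite (reindex_onto (fun Y : {set T} => x |: Y) (fun X : {set T} => X :\ x)) /=; last first.
  by move=> X; apply: setD1K.
apply: eq_bigl => Y; rewrite setU11 /=.
have [xY | xNY] := boolP (x \in Y); last by rewrite setU1K ?eqxx.
by apply/negbTE/eqP => eY; move: xY; rewrite -eY setD11.
Qed.

Section SubsetMeasure.
Variables (T : finType) (R : realFieldType).
Implicit Types (S X : {set T}) (q : T -> R) (E : pred {set T}).

Definition subset_weight S q X : R :=
  \prod_(s in S) (if s \in X then q s else 1 - q s).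

Definition subset_measure S q E : R :=
  \sum_(X : {set T} | (X \subset S) && E X) subset_weight S q X.

Lemma eq_subset_weight S q q' X :
  {in S, q =1 q'} -> subset_weight S q X = subset_weight S q' X.
Proof. by move=> qq'; apply: eq_bigr => s /qq' ->. Qed.

Lemma subset_weight_ge0 S q X :
  {in S, forall s, 0 <= q s <= 1} -> 0 <= subset_weight S q X.
Proof.
move=> q01; apply: prodr_ge0 => s /q01 /andP[q_ge0 q_le1].
by case: (s \in X); rewrite ?subr_ge0.
Qed.

Lemma subset_weight_setD1 S q X x : x \in S ->
  subset_weight S q X =
  (if x \in X then q x else 1 - q x) * subset_weight (S :\ x) q X.
Proof.
move=> xS; rewrite /subset_weight (bigD1 x xS) /=; congr (_ * _).
by apply: eq_bigl => s; rewrite !inE andbC.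
Qed.

Lemma subset_weight_setU1 S q X x : x \notin S ->
  subset_weight S q (x |: X) = subset_weight S q X.
Proof.
move=> xNS; apply: eq_bigr => s sS; rewrite in_setU1.
by case: eqP => // esx; move: xNS; rewrite -esx sS.
Qed.

Lemma subset_measure_mono1 S q q' E x :
  upward_closed E -> x \in S -> {in S :\ x, q =1 q'} -> q x <= q' x ->
  {in S, forall s, 0 <= q s <= 1} ->
  subset_measure S q E <= subset_measure S q' E.
Proof.
move=> Eup xS qq' le_qx q01.
rewrite /subset_measure big_mkcond [X in _ <= X]big_mkcond /=.
rewrite !(sumr_sets_setU1 x); apply: ler_sum => X xNX.
rewrite !(subset_weight_setD1 _ _ xS) setU11 (negbTE xNX).
rewrite !subset_weight_setU1 ?setD11 // -(eq_subset_weight X qq').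
set w := subset_weight _ q X.
have w_ge0 : 0 <= w.
  by apply: subset_weight_ge0 => s /setD1P[_ /q01].
have EXU : (X \subset S) && E X -> (x |: X \subset S) && E (x |: X).
  case/andP=> XS EX; rewrite subUset sub1set xS XS.
  by apply: Eup EX; apply: subsetUr.
case: ((X \subset S) && E X) EXU => [-> // | _].
  by rewrite -!mulrDl !subrK.
by case: (_ && _); rewrite ?add0r ?ler_wpM2r.
Qed.

Lemma subset_measure_mono S p p' E :
  upward_closed E ->
  {in S, forall s, 0 <= p s <= 1} -> {in S, forall s, 0 <= p' s <= 1} ->
  {in S, forall s, p s <= p' s} ->
  subset_measure S p E <= subset_measure S p' E.
Proof.
move=> Eup p01 p'01 le_pp'.
pose mix (l : seq T) s := if s \in l then p' s else p s.
have mix_ge l : all [in S] l -> subset_measure S p E <= subset_measure S (mix l) E.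
  elim: l => [|x l IHl] //= /andP[xS lS]; apply: le_trans (IHl lS) _.
  apply: (subset_measure_mono1 Eup xS).
  - by move=> s /setD1P[sx _]; rewrite /mix in_cons (negbTE sx).
  - by rewrite /mix in_cons eqxx; case: (x \in l) => //; apply: le_pp'.
  - by move=> s sS; rewrite /mix; case: (s \in l); [apply: p'01 | apply: p01].
have -> : subset_measure S p' E = subset_measure S (mix (enum S)) E.
  by apply: eq_bigr => X _; apply: eq_subset_weight => s sS; rewrite /mix mem_enum sS.
by apply: mix_ge; apply/allP => s; rewrite mem_enum.
Qed.

End SubsetMeasure.

Section RandomComplexMonotonicity.
Variable n : nat.

Lemma lower_measureE (R : realFieldType) (p : {set 'I_n.+1} -> R) E :
  lower_measure p E = subset_measure (simplices n) p (E \o @lower_cx n).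
Proof. by []. Qed.

Lemma upper_measureE (R : realFieldType) (p : {set 'I_n.+1} -> R) E :
  upper_measure p E = subset_measure (simplices n) p (E \o @upper_cx n).
Proof. by []. Qed.

Lemma lower_cx_subset : {homo @lower_cx n : X Y / X \subset Y}.
Proof.
move=> X Y XY; apply/subsetP => s; rewrite !inE => /andP[sX /forallP facesX].
rewrite (subsetP XY) //=; apply/forallP => t; apply/implyP => tface.
by apply: (subsetP XY); apply: (implyP (facesX t)).
Qed.

Lemma upper_cx_subset : {homo @upper_cx n : X Y / X \subset Y}.
Proof.
move=> X Y XY; apply/subsetP => t; rewrite !inE => /andP[-> /existsP[s]] /=.
by case/andP=> sX ts; apply/existsP; exists s; rewrite ts (subsetP XY).
Qed.

Lemma dim_ge_upward d : upward_closed (fun Y => @dim_ge n Y d).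
Proof.
move=> Y Z YZ /existsP[s /andP[sY ds]]; apply/existsP; exists s.
by rewrite ds (subsetP YZ).
Qed.

End RandomComplexMonotonicity.

Theorem corollary4p3 (R : realFieldType) (n : nat)
    (p p' : {set 'I_n.+1} -> R)
    (hp : forall s, s \in simplices n -> 0 <= p s <= 1)
    (hp' : forall s, s \in simplices n -> 0 <= p' s <= 1)
    (hle : forall s, s \in simplices n -> p s <= p' s)
    (d : nat) :
  lower_measure p (fun Y => dim_ge Y d) <= lower_measure p' (fun Y => dim_ge Y d) /\
  upper_measure p (fun Y => dim_ge Y d) <= upper_measure p' (fun Y => dim_ge Y d).
Proof.
split.
- rewrite !lower_measureE; apply: subset_measure_mono => //.
  by apply: upward_closed_comp; [apply: dim_ge_upward | apply: lower_cx_subset].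
- rewrite !upper_measureE; apply: subset_measure_mono => //.
  by apply: upward_closed_comp; [apply: dim_ge_upward | apply: upper_cx_subset].
Qed.
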